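(* Let $A\in\mathbb{R}^{n\times n}$, $B\in\mathbb{R}^{n\times m}$, $\bar T>0$, let $\tilde B\in\mathbb{C}^{r\times m}$ be fixed and let $D=\operatorname{diag}(\lambda_1,\ldots,\lambda_r)$, with $\lambda_i+\lambda_j\neq 0$ for all $i,j$ and $\lambda_i\notin\Lambda(-A)$ for all $i$. Let $\tilde P_{\bar T}=\tilde P_{\bar T}(\lambda_1,\dots,\lambda_r)$ and $\tilde P_{2,\bar T}=\tilde P_{2,\bar T}(\lambda_1,\dots,\lambda_r)$ be the solutions of $$A \tilde P_{2, {\bar T}}+ \tilde P_{2, {\bar T}} D =-B \tilde B^T+e^{A \bar T}B \tilde B^T e^{D \bar T},\qquad D\tilde P_{\bar T}+\tilde P_{\bar T} D =-\tilde B \tilde B^T+e^{D \bar T}\tilde B \tilde B^T e^{D \bar T}.$$ Then for each $i\in\{1,\dots,r\}$ the partial derivatives $X^{(i)}:=\partial_{\lambda_i} \tilde P_{\bar T}$ and $X_2^{(i)}:=\partial_{\lambda_i} \tilde P_{2, \bar T}$ solve $$DX^{(i)}+X^{(i)} D =-e_ie_i^T\tilde P_{\bar T}-\tilde P_{\bar T}e_ie_i^T+\bar T e_ie_i^Te^{D \bar T}\tilde B \tilde B^T e^{D \bar T}+\bar Te^{D \bar T}\tilde B \tilde B^T e^{D \bar T}e_ie_i^T,$$ $$A X_2^{(i)}+ X_2^{(i)} D =-\tilde P_{2, {\bar T}} e_ie_i^T+\bar T e^{A \bar T}B \tilde B^T e^{D \bar T}e_ie_i^T,$$ respectively.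
   Context: $e_i$ denotes the $i$-th column of the identity matrix of appropriate size. $\Lambda(A)$ is the spectrum of $A$. In the paper's setting $D$ arises from a diagonalization $\hat A=S^{-1}DS$ of a reduced matrix $\hat A$ and $\tilde B=S\hat B$; the derivatives are taken with respect to the eigenvalues $\lambda_i$ with $\tilde B$ held fixed. *)

From HB Require Import structures.
From mathcomp Require Import all_boot all_order all_algebra.
From mathcomp Require Import complex.
From mathcomp Require Import all_classical all_reals all_analysis.
Set Implicit Arguments. Unset Strict Implicit. Unset Printing Implicit Defensive.
Import Order.TTheory GRing.Theory Num.Theory.
Import numFieldNormedType.Exports.
Local Open Scope ring_scope.
Local Open Scope complex_scope.

Definition expmx (K : numFieldType) (n : nat) (M : 'M[K]_n) : 'M[K]_n :=
  limn (series (fun k : nat => (k`!%:R)^-1 *: M ^+ k)).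

Definition cmx (R : rcfType) (p q : nat) (M : 'M[R]_(p, q)) : 'M[R[i]]_(p, q) :=
  map_mx (fun x : R => x%:C) M.

From HB Require Import structures.
From mathcomp Require Import all_boot all_order all_algebra.
From mathcomp Require Import complex perm.
From mathcomp Require Import all_classical all_reals all_analysis.
From mathcomp Require Import ring zify.
Set Implicit Arguments.
Unset Strict Implicit.
Unset Printing Implicit Defensive.
Import Order.TTheory GRing.Theory Num.Theory.
Import numFieldNormedType.Exports.
Local Open Scope ring_scope.
Local Open Scope classical_set_scope.

Section MatrixLimits.
Context {K : numFieldType}.

Lemma cvg_mxP {T : Type} {F : set_system T} {FF : Filter F} m n
    (f : T -> 'M[K]_(m, n)) (L : 'M[K]_(m, n)) :
  f @ F --> L <-> forall i j, (fun x => f x i j) @ F --> L i j.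
Proof.
split=> [fL i j | fL].
  exact: (continuous_cvg _ (@coord_continuous K m n i j L) fL).
apply/cvg_mx_entourageP => A entA.
apply: filter_forall => i; apply: filter_forall => j.
have /cvg_entourageP /(_ A entA) := fL i j.
by move=> h; near=> M; rewrite inE; near: M; exact: h.
Unshelve. all: by end_near. Qed.

Lemma cvg_det {T : Type} {F : set_system T} {FF : Filter F} n
    (f : T -> 'M[K]_n) (L : 'M[K]_n) :
  f @ F --> L -> (fun t => \det (f t)) @ F --> \det L.
Proof.
move=> /cvg_mxP fL; apply: cvg_big => [|s _]; first exact: add_continuous.
apply: cvgM; first exact: cvg_cst.
by apply: cvg_big => [|i _]; [exact: mul_continuous | exact: fL].
Qed.

End MatrixLimits.

Lemma addmx_scalar_unitmxE {F : fieldType} n (A : 'M[F]_n) (a : F) :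
  (A + a%:M \in unitmx) = ~~ eigenvalue (- A) a.
Proof.
rewrite /eigenvalue /eigenspace negbK kermx_eq0 row_free_unit !unitmxE !unitfE.
by rewrite -opprD -scaleN1r detZ mulf_eq0 signr_eq0.
Qed.

Section MatrixDerivatives.
Context {K : numFieldType} {V : normedModType K}.

Lemma derivable_mx_entriesP m n (M : V -> 'M[K]_(m, n)) x v :
  derivable M x v <-> forall i j, derivable (fun y => M y i j) x v.
Proof.
split=> [/cvg_ex[/= l /cvg_mxP Ml] i j | Mij].
  apply/cvg_ex; exists (l i j); move: (Ml i j).
  by under eq_cvg do rewrite !mxE.
apply/cvg_ex; exists (\matrix_(i, j) 'D_v (fun y => M y i j) x).
apply/cvg_mxP => i j; rewrite mxE.
by under eq_cvg do rewrite !mxE; exact: Mij.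
Qed.

Lemma derive_mx_entries m n (M : V -> 'M[K]_(m, n)) x v :
  derivable M x v -> 'D_v M x = \matrix_(i, j) 'D_v (fun y => M y i j) x.
Proof.
move=> /derivable_mx_entriesP Mij; apply: norm_cvg_lim.
apply/cvg_mxP => i j; rewrite mxE.
by under eq_cvg do rewrite !mxE; exact: Mij.
Qed.

Lemma mulmx_entry_fun p q s (M : V -> 'M[K]_(p, q)) (N : V -> 'M[K]_(q, s)) i j :
  (fun y => (M y *m N y) i j) = \sum_k ((fun y => M y i k) * (fun y => N y k j)).
Proof. by apply/funext => y; rewrite mxE fct_sumE. Qed.

Lemma derivable_mulmx p q s (M : V -> 'M[K]_(p, q)) (N : V -> 'M[K]_(q, s)) x v :
  derivable M x v -> derivable N x v -> derivable (fun y => M y *m N y) x v.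
Proof.
move=> /derivable_mx_entriesP dM /derivable_mx_entriesP dN.
apply/derivable_mx_entriesP => i j; rewrite mulmx_entry_fun.
by apply: derivable_sum => k; exact: derivableM.
Qed.

Lemma derive_mulmx p q s (M : V -> 'M[K]_(p, q)) (N : V -> 'M[K]_(q, s)) x v :
  derivable M x v -> derivable N x v ->
  'D_v (fun y => M y *m N y) x = 'D_v M x *m N x + M x *m 'D_v N x.
Proof.
move=> dM dN; rewrite !derive_mx_entries //; last exact: derivable_mulmx.
have /derivable_mx_entriesP dM' := dM; have /derivable_mx_entriesP dN' := dN.
apply/matrixP => i j; rewrite !mxE mulmx_entry_fun derive_sum; last first.
  by move=> k; exact: derivableM.
rewrite -big_split; apply: eq_bigr => k _ /=.
by rewrite deriveM // !mxE addrC; congr (_ + _); exact: mulrC.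
Qed.

Lemma derivable_big_sum (I : Type) (r : seq I) (F : I -> V -> K) x v :
  (forall i, derivable (F i) x v) -> derivable (fun y => \sum_(i <- r) F i y) x v.
Proof.
move=> dF; elim: r => [|i r IH]; first by under eq_fun do rewrite big_nil; exact: derivable_cst.
by under eq_fun do rewrite big_cons; exact: (derivableD (dF i) IH).
Qed.

Lemma derivable_big_prod (I : Type) (r : seq I) (F : I -> V -> K) x v :
  (forall i, derivable (F i) x v) -> derivable (fun y => \prod_(i <- r) F i y) x v.
Proof.
move=> dF; elim: r => [|i r IH]; first by under eq_fun do rewrite big_nil; exact: derivable_cst.
by under eq_fun do rewrite big_cons; exact: (derivableM (dF i) IH).
Qed.

Lemma derive_mulmxl p q s (A : 'M[K]_(p, q)) (M : V -> 'M[K]_(q, s)) x v :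
  derivable M x v -> 'D_v (fun y => A *m M y) x = A *m 'D_v M x.
Proof.
move=> dM; rewrite (derive_mulmx (derivable_cst A x v) dM).
by rewrite derive_cst mul0mx add0r.
Qed.

Lemma derive_cstD {W : normedModType K} (a : W) (f : V -> W) x v :
  derivable f x v -> 'D_v (fun y => a + f y) x = 'D_v f x.
Proof. by move=> df; rewrite (deriveD (derivable_cst a x v) df) derive_cst add0r. Qed.

Lemma derivable_det n (M : V -> 'M[K]_n) x v :
  derivable M x v -> derivable (fun y => \det (M y)) x v.
Proof.
move=> /derivable_mx_entriesP dM; apply: derivable_big_sum => s.
exact: (derivableM (derivable_cst _ _ _) (derivable_big_prod (fun i => dM i (s i)))).
Qed.

Lemma derivable_invmx n (M : V -> 'M[K]_n) x v :
  (\forall y \near x, M y \in unitmx) -> derivable M x v ->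
  derivable (fun y => invmx (M y)) x v.
Proof.
move=> Mu dM.
apply: (@near_eq_derivable _ _ _ (fun y => (\det (M y))^-1 *: \adj (M y))).
  by apply: filterS Mu => y Muy; rewrite /invmx Muy.
have detMx : \det (M x) != 0 by rewrite -unitfE -unitmxE (nbhs_singleton Mu).
have /derivable_mx_entriesP dM' := dM.
have dinv : derivable (fun y => (\det (M y))^-1) x v.
  exact: (@derivableV K V (fun y => \det (M y)) x v detMx (derivable_det dM)).
have dminor i j : derivable (fun y => \det (row' i (col' j (M y)))) x v.
  apply: derivable_det; apply/derivable_mx_entriesP => a b.
  by under eq_fun do rewrite !mxE; exact: dM'.
apply/derivable_mx_entriesP => i j; under eq_fun do rewrite !mxE.
exact: (derivableM dinv (derivableM (derivable_cst _ _ _) (dminor j i))).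
Qed.

Lemma derivable_row n (F : 'I_n -> V -> K) x v :
  (forall j, derivable (F j) x v) -> derivable (fun y => \row_j F j y) x v.
Proof. by move=> dF; apply/derivable_mx_entriesP => i j; under eq_fun do rewrite mxE; exact: dF. Qed.

Lemma derive_row n (F : 'I_n -> V -> K) x v :
  (forall j, derivable (F j) x v) ->
  'D_v (fun y => \row_j F j y) x = \row_j 'D_v (F j) x.
Proof.
move=> dF; rewrite derive_mx_entries; last exact: derivable_row.
by apply/rowP => j; rewrite !mxE; under eq_fun do rewrite mxE.
Qed.

Lemma derivable_scalar_mx n (f : V -> K) x v :
  derivable f x v -> derivable (fun y => (f y)%:M : 'M[K]_n) x v.
Proof.
move=> df; apply/derivable_mx_entriesP => i j; under eq_fun do rewrite mxE.
by case: (i == j); under eq_fun do rewrite ?mulr1n ?mulr0n; [exact: df | exact: derivable_cst].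
Qed.

Lemma derivable_diag_mx n (d : V -> 'rV[K]_n) x v :
  derivable d x v -> derivable (fun y => diag_mx (d y)) x v.
Proof.
move=> /derivable_mx_entriesP dd; apply/derivable_mx_entriesP => i j.
under eq_fun do rewrite mxE.
case: (i == j); under eq_fun do rewrite ?mulr1n ?mulr0n; [exact: dd | exact: derivable_cst].
Qed.

Lemma derive_diag_mx n (d : V -> 'rV[K]_n) x v :
  derivable d x v -> 'D_v (fun y => diag_mx (d y)) x = diag_mx ('D_v d x).
Proof.
move=> dd; rewrite !derive_mx_entries //; last exact: derivable_diag_mx.
apply/matrixP => i j; rewrite !mxE; under eq_fun do rewrite mxE.
by case: (i == j); under eq_fun do rewrite ?mulr1n ?mulr0n; rewrite ?derive_cst.
Qed.

End MatrixDerivatives.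

Lemma is_derive_comp_affine {K : numFieldType} {V W : normedModType K}
    (f : K -> W) (g : V -> K) (x v : V) (c : K) (df : W) :
  (forall h, g (h *: v + x) = h *: c + g x) ->
  is_derive (g x) c f df -> is_derive x v (f \o g) df.
Proof.
move=> gE [fd fD].
have qE : (fun h => h^-1 *: (((f \o g) \o shift x) (h *: v) - (f \o g) x))
    = (fun h => h^-1 *: ((f \o shift (g x)) (h *: c) - f (g x))).
  by apply/funext => h; rewrite /= gE.
by split; rewrite /derivable /derive qE.
Qed.

Lemma scale_diag_mx {K : pzRingType} n (a : K) (d : 'rV[K]_n) :
  a *: diag_mx d = diag_mx (\row_j (a * d 0 j)).
Proof. by apply/matrixP => i j; rewrite !mxE mulrnAr. Qed.

Lemma tr_delta_row_mul {K : pzSemiRingType} n (k : 'I_n) :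
  ('e_k : 'rV[K]_n)^T *m 'e_k = diag_mx 'e_k.
Proof.
rewrite trmx_delta mul_delta_mx; apply/matrixP => i j; rewrite !mxE eqxx /=.
case: (eqVneq i j) => [<-|ij]; rewrite ?andbb ?mulr1n ?mulr0n //.
by case: (eqVneq i k) => [ik|] //=; rewrite -ik eq_sym (negPf ij).
Qed.

Lemma diag_mx_expr {K : pzSemiRingType} n (e : 'rV[K]_n) k :
  diag_mx e ^+ k = diag_mx (\row_j e 0 j ^+ k).
Proof.
elim: k => [|k IH]; first by apply/matrixP => i j; rewrite !mxE expr0.
rewrite exprS IH -mulmxE mulmx_diag; congr diag_mx.
by apply/rowP => j; rewrite !mxE exprS.
Qed.

Section Sylvester.
Context {K : numFieldType} {V : normedModType K} {p q : nat}.
Variables (N : V -> 'M[K]_p) (d : V -> 'rV[K]_q) (X G : V -> 'M[K]_(p, q)).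
Variables (x v : V).

Lemma col_sylvester (A : 'M[K]_p) (Y : 'M[K]_(p, q)) (e : 'rV[K]_q) j :
  col j (A *m Y + Y *m diag_mx e) = (A + (e 0 j)%:M) *m col j Y.
Proof.
apply/colP => a; rewrite mul_mx_diag mulmxDl mul_scalar_mx !mxE.
by congr (_ + _); [apply: eq_bigr => b _; rewrite !mxE | exact: mulrC].
Qed.

Hypothesis sylvesterN : \forall y \near x,
  (forall j, N y + (d y 0 j)%:M \in unitmx) /\ N y *m X y + X y *m diag_mx (d y) = G y.
Hypotheses (dN : derivable N x v) (dd : derivable d x v) (dG : derivable G x v).

Lemma derivable_sylvester : derivable X x v.
Proof.
apply/derivable_mx_entriesP => a j.
have dNj : derivable (fun y => N y + (d y 0 j)%:M) x v.
  have /derivable_mx_entriesP /(_ 0 j) ddj := dd.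
  exact: (derivableD dN (derivable_scalar_mx (n := p) ddj)).
have dGj : derivable (fun y => col j (G y)) x v.
  apply/derivable_mx_entriesP => b c; under eq_fun do rewrite mxE.
  by move/derivable_mx_entriesP : dG; apply.
have unitj : \forall y \near x, N y + (d y 0 j)%:M \in unitmx.
  by apply: filterS sylvesterN => y [+ _]; apply.
have /derivable_mx_entriesP /(_ a 0) := derivable_mulmx (derivable_invmx unitj dNj) dGj.
apply: near_eq_derivable; apply: filterS sylvesterN => y [Nyu <-].
by rewrite col_sylvester mulKmx // mxE.
Qed.

Lemma derive_sylvester :
  N x *m 'D_v X x + 'D_v X x *m diag_mx (d x)
  = 'D_v G x - ('D_v N x *m X x + X x *m diag_mx ('D_v d x)).
Proof.
have dX := derivable_sylvester; have dD := derivable_diag_mx dd.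
have -> : 'D_v G x = 'D_v (fun y => N y *m X y + X y *m diag_mx (d y)) x.
  by apply: near_eq_derive; apply: filterS sylvesterN => y [_ ->].
rewrite deriveD; try exact: derivable_mulmx.
by rewrite !derive_mulmx // derive_diag_mx // ['D_v N x *m X x + _]addrC addrACA addrK.
Qed.

End Sylvester.

Section ComplexLimits.
Context {R : realType}.
Local Open Scope complex_scope.
Local Notation C := (Num.NumField.sort (R[i] : numFieldType)).

Lemma normC_real (x : R) : `|x%:C| = `|x|%:C.
Proof. by rewrite normc_def /= expr0n addr0 sqrtr_sqr. Qed.

Lemma normC_ge_Im (z : R[i]) : `|complex.Im z|%:C <= `|z|.
Proof.
have := normc_ge_Re (z * 'i); rewrite ReiNIm normrN normrM.
by rewrite [`|'i|]normc_def /= expr0n expr1n add0r sqrtr1 mulr1.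
Qed.

Lemma cvgC_real {T : Type} {F : set_system T} {FF : Filter F} (f : T -> R) (a : R) :
  f @ F --> a -> (fun t => (f t)%:C : C) @ F --> (a%:C : C).
Proof.
move=> /cvgrPdist_le fa; apply/cvgrPdist_le => -[e e'].
rewrite ltcE /= => /andP[/eqP -> e0].
by apply: filterS (fa e e0) => t; rewrite -rmorphB normC_real lecR.
Qed.

Lemma cvgC_ReIm {T : Type} {F : set_system T} {FF : Filter F} (u : T -> C) (a b : R) :
  (fun t => complex.Re (u t)) @ F --> a -> (fun t => complex.Im (u t)) @ F --> b ->
  u @ F --> (a +i* b : C).
Proof.
move=> ua ub; have -> : (a +i* b : C) = a%:C + 'i * b%:C by rewrite [LHS]complexE.
under eq_cvg do rewrite [u _]complexE.
by apply: cvgD; [|apply: cvgM; [exact: cvg_cst|]]; exact: cvgC_real.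
Qed.

Lemma is_cvg_series_real_dominated (f c : R ^nat) :
  (forall k, `|f k| <= c k) -> cvgn (series c) -> cvgn (series f).
Proof.
move=> fc cc; apply: (@normed_cvg _ R^o); apply: series_le_cvg cc => // k; first exact: normr_ge0.
exact: le_trans (fc k).
Qed.

Lemma is_cvg_series_dominated (u : C ^nat) (c : R ^nat) :
  (forall k, `|u k| <= (c k)%:C) -> cvgn (series c) -> cvgn (series u).
Proof.
move=> uc cc.
have cRe : cvgn (series (fun k => complex.Re (u k))).
  by apply: is_cvg_series_real_dominated cc => k; rewrite -lecR (le_trans (normc_ge_Re _)).
have cIm : cvgn (series (fun k => complex.Im (u k))).
  by apply: is_cvg_series_real_dominated cc => k; rewrite -lecR (le_trans (normC_ge_Im _)).
apply/cvg_ex; eexists; apply: cvgC_ReIm.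
  have -> : (fun t => complex.Re (series u t)) = series (fun k => complex.Re (u k)).
    by apply/funext => n; rewrite /series /= raddf_sum.
  exact: cRe.
have -> : (fun t => complex.Im (series u t)) = series (fun k => complex.Im (u k)).
  by apply/funext => n; rewrite /series /= raddf_sum.
exact: cIm.
Qed.

End ComplexLimits.

Section PowerRemainder.
Context {K : numDomainType}.

Lemma expr_remainderS (w u : K) k :
  (w + u) ^+ k.+1 - w ^+ k.+1 - k.+1%:R * u * w ^+ k =
  (w + u) * ((w + u) ^+ k - w ^+ k - k%:R * u * w ^+ k.-1) + k%:R * u ^+ 2 * w ^+ k.-1.
Proof. by case: k => [|k]; rewrite ?exprS /=; ring. Qed.

Lemma norm_expr_remainder (w u : K) k : `|u| <= 1 ->
  `|(w + u) ^+ k - w ^+ k - k%:R * u * w ^+ k.-1|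
    <= `|u| ^+ 2 * k%:R ^+ 2 * (`|w| + 1) ^+ k.
Proof.
move=> u1; set b : K := `|w| + 1.
have b1 : 1 <= b by rewrite lerDr.
have b0 : 0 <= b := le_trans ler01 b1.
have wub : `|w + u| <= b by apply: le_trans (ler_normD _ _) _; rewrite lerD2l.
elim: k => [|k IH]; first by rewrite !expr0 !mul0r subr0 subrr normr0 expr0n mulr0 mul0r.
have wk : `|w| ^+ k.-1 <= b ^+ k.+1.
  apply: (@le_trans _ _ (b ^+ k.-1)); last by rewrite ler_weXn2l // (leq_trans (leq_pred k)).
  by apply: lerXn2r; rewrite ?nnegrE // lerDl.
rewrite expr_remainderS; apply: le_trans (ler_normD _ _) _.
rewrite normrM [`|k%:R * _ * _|]normrM normrM normr_nat !normrX.
apply: le_trans (lerD (ler_pM _ _ wub IH) (ler_wpM2l _ wk)) _ => //.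
rewrite [leLHS](_ : _ = `|u| ^+ 2 * (k%:R ^+ 2 + k%:R) * b ^+ k.+1); last first.
  by rewrite !(exprS b); ring.
rewrite ler_wpM2r ?exprn_ge0 // ler_wpM2l ?exprn_ge0 //.
by rewrite -!natrX -natrD ler_nat; lia.
Qed.

End PowerRemainder.

Lemma norm_cvg_le {K : numFieldType} {T : Type} {F : set_system T} {FF : ProperFilter F}
    (f : T -> K) (l c : K) :
  f @ F --> l -> (forall t, `|f t| <= c) -> `|l| <= c.
Proof.
move=> fl fc; apply/ler_addgt0Pr => e e0.
have [t /= lt] := filter_ex ((cvgrPdist_lt _ _).1 fl e e0).
rewrite -(subrK (f t) l) (le_trans (ler_normD _ _)) // addrC lerD //; exact: ltW.
Qed.

Lemma sqrn_leq_exp4 k : (k ^ 2 <= 4 ^ k)%N.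
Proof.
have -> : (4 ^ k = (2 ^ k) ^ 2)%N by rewrite -expnM mulnC expnM.
by rewrite leq_exp2r // ltnW // ltn_expl.
Qed.

Section ComplexExp.
Context {R : realType}.
Local Open Scope complex_scope.
Local Notation C := (Num.NumField.sort (R[i] : numFieldType)).

Definition exp_series (z : C) : C ^nat := series (fun k => (k`!%:R)^-1 * z ^+ k).

Definition cexp (z : C) : C := limn (exp_series z).

Lemma cexp_cvg z : exp_series z @ \oo --> cexp z.
Proof.
apply: (is_cvg_series_dominated (c := exp_coeff (complex.Re `|z|))) => [k|].
  rewrite /exp_coeff /= rmorphM rmorphXn fmorphV rmorph_nat.
  by rewrite normrM normrX normfV normr_nat mulrC.
exact: is_cvg_series_exp_coeff.
Qed.

Lemma exp_series_real_le (x : R) N : 0 <= x -> exp_series x%:C N <= (expR x)%:C.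
Proof.
move=> x0; rewrite /exp_series /series /=.
rewrite (_ : \sum_(0 <= k < N) _ = (\sum_(0 <= k < N) (k`!%:R)^-1 * x ^+ k)%:C); last first.
  by rewrite rmorph_sum; apply: eq_bigr => k _; rewrite rmorphM rmorphXn fmorphV rmorph_nat.
rewrite lecR expRE.
apply: (nondecreasing_cvgn_le (u_ := pseries (fun k => (k`!%:R)^-1) x)).
  by apply: nondecreasing_series => k _ _; rewrite mulr_ge0 ?exprn_ge0 ?invr_ge0.
by rewrite /pseries -exp_coeffE; exact: is_cvg_series_exp_coeff.
Qed.

Lemma exp_series_derivE (w : C) N :
  \sum_(k < N.+1) (k`!%:R)^-1 * (k%:R * w ^+ k.-1) = exp_series w N.
Proof.
rewrite big_ord_recl /= mul0r mulr0 add0r /exp_series /series /= big_mkord.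
apply: eq_bigr => k _; rewrite /bump /= add1n factS natrM invfM.
by rewrite mulrACA mulVf ?mul1r // pnatr_eq0.
Qed.

Lemma exp_series_remainderE (w u : C) N :
  \sum_(k < N.+1) (k`!%:R)^-1 * ((w + u) ^+ k - w ^+ k - k%:R * u * w ^+ k.-1)
  = exp_series (w + u) N.+1 - exp_series w N.+1 - u * exp_series w N.
Proof.
rewrite -(exp_series_derivE w N) /exp_series /series /= !big_mkord mulr_sumr -!sumrB.
by apply: eq_bigr => k _; ring.
Qed.

Lemma norm_cexp_remainder (w u : C) : `|u| <= 1 ->
  `|cexp (w + u) - cexp w - u * cexp w|
    <= `|u| ^+ 2 * (expR (4 * complex.Re (`|w| + 1)))%:C.
Proof.
move=> u1; apply: (@norm_cvg_le _ _ \oo _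
  (fun N => \sum_(k < N.+1) (k`!%:R)^-1 * ((w + u) ^+ k - w ^+ k - k%:R * u * w ^+ k.-1))).
  under eq_fun do rewrite exp_series_remainderE.
  apply: cvgB; last by apply: cvgM; [exact: cvg_cst | exact: cexp_cvg].
  by apply: cvgB; rewrite cvg_shiftS; exact: cexp_cvg.
move=> N; apply: le_trans (ler_norm_sum _ _ _) _.
set r := complex.Re (`|w| + 1).
have rE : r%:C = `|w| + 1 by rewrite RRe_real // realD ?normr_real ?real1.
have r0 : 0 <= r by rewrite -lecR rE addr_ge0.
apply: (@le_trans _ _ (\sum_(k < N.+1) `|u| ^+ 2 * ((k`!%:R)^-1 * (4 * r)%:C ^+ k))).
  apply: ler_sum => k _; rewrite normrM normfV normr_nat mulrCA ler_wpM2l ?invr_ge0 //.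
  apply: le_trans (norm_expr_remainder _ _ u1) _; rewrite -mulrA ler_wpM2l ?exprn_ge0 //.
  have -> : (4 * r)%:C = 4 * (`|w| + 1) :> C by rewrite -rE rmorphM rmorph_nat.
  rewrite exprMn ler_wpM2r ?exprn_ge0 ?addr_ge0 //.
  by rewrite -!natrX ler_nat sqrn_leq_exp4.
rewrite -mulr_sumr ler_wpM2l ?exprn_ge0 //.
have := exp_series_real_le N.+1 (mulr_ge0 (ler0n _ 4) r0).
by rewrite /exp_series /series /= big_mkord.
Qed.

Lemma expmx_diag_mx n (f : 'I_n -> C) :
  expmx (diag_mx (\row_j f j)) = diag_mx (\row_j cexp (f j)).
Proof.
apply: norm_cvg_lim; apply/cvg_mxP => i j; rewrite !mxE.
have -> : (fun N => series (fun k => (k`!%:R)^-1 *: diag_mx (\row_j f j) ^+ k) N i j)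
    = (fun N => exp_series (f i) N *+ (i == j)).
  apply/funext => N; rewrite /exp_series /series /= summxE -sumrMnl.
  by apply: eq_bigr => k _; rewrite diag_mx_expr !mxE mulrnAr.
by case: (i == j); under eq_cvg do rewrite ?mulr1n ?mulr0n; [exact: cexp_cvg | exact: cvg_cst].
Qed.

Lemma is_derive_cexp (w c : C) : is_derive w c cexp (c * cexp w).
Proof.
set K := (expR (4 * complex.Re (`|w| + 1)))%:C.
have K0 : 0 <= K by rewrite ler0c expR_ge0.
set M := `|c| ^+ 2 * K + `|c| + 1.
have M0 : 0 < M by rewrite ltr_pwDr // addr_ge0 // mulr_ge0 ?exprn_ge0.
suff qcvg : (fun h : C => h^-1 *: (cexp (h *: c + w) - cexp w)) @ 0^' --> c * cexp w.
  by apply: DeriveDef; [apply/cvg_ex; exists (c * cexp w) | exact: cvg_lim].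
apply/cvgrPdist_le => e e0; near=> h.
have h0 : h != 0 by near: h; exact: nbhs_dnbhs_neq.
have hM1 : `|h| * M <= 1.
  by rewrite -ler_pdivlMr // div1r ltW //; near: h; apply: dnbhs0_lt; rewrite invr_gt0.
have hMe : `|h| * M <= e.
  by rewrite -ler_pdivlMr // ltW //; near: h; apply: dnbhs0_lt; rewrite divr_gt0.
have -> : c * cexp w - h^-1 *: (cexp (h *: c + w) - cexp w)
    = - (h^-1 * (cexp (w + h * c) - cexp w - h * c * cexp w)).
  rewrite [h *: c + w]addrC; change (h *: c) with (h * c).
  change (h^-1 *: ?x) with (h^-1 * x).
  by rewrite [in RHS]mulrBr opprB mulrA mulKf.
rewrite normrN normrM normfV ler_pdivrMl ?normr_gt0 //.
apply: le_trans (norm_cexp_remainder _ _) _.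
  rewrite normrM (le_trans _ hM1) // ler_wpM2l //.
  by rewrite /M ler_wpDr // ler_wpDl // mulr_ge0 ?exprn_ge0.
rewrite normrM exprMn expr2 -!mulrA ler_wpM2l // (le_trans _ hMe) // ler_wpM2l //.
by rewrite mulrA -expr2 -/K /M -addrA lerDl addr_ge0.
Unshelve. all: by end_near. Qed.

End ComplexExp.

Section Invertibility.
Context {K : numFieldType} {r : nat}.
Implicit Types l : 'rV[K]_r.

Lemma diag_add_scalar_unitmx l j :
  (forall i, l 0 i + l 0 j != 0) -> diag_mx l + (l 0 j)%:M \in unitmx.
Proof.
move=> lij; have -> : diag_mx l + (l 0 j)%:M = diag_mx (\row_i (l 0 i + l 0 j)).
  by apply/matrixP => a b; rewrite !mxE mulrnDl.
by rewrite unitmxE det_diag unitfE; apply/prodf_neq0 => i _; rewrite mxE.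
Qed.

Lemma near_sum_neq0 l :
  (forall i j, l 0 i + l 0 j != 0) ->
  \forall y \near l, forall i j, (y : 'rV[K]_r) 0 i + y 0 j != 0.
Proof.
move=> lij; apply: (filter_forall (F := nbhs l)) => i.
apply: (filter_forall (F := nbhs l)) => j.
apply: (@cvgr_neq0 _ _ _ (nbhs l) _ (fun y : 'rV[K]_r => y 0 i + y 0 j) _ _ (lij i j)).
by apply: cvgD; exact: coord_continuous.
Qed.

Lemma near_not_eigenvalue n (A : 'M[K]_n) l :
  (forall j, ~~ eigenvalue (- A) (l 0 j)) ->
  \forall y \near l, forall j, ~~ eigenvalue (- A) ((y : 'rV[K]_r) 0 j).
Proof.
move=> lj; apply: (filter_forall (F := nbhs l)) => j.
have : (fun y => \det (A + (y 0 j)%:M)) @ l --> \det (A + (l 0 j)%:M).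
  apply: cvg_det; apply/cvg_mxP => a b; rewrite mxE [_%:M a b]mxE.
  under eq_cvg do rewrite mxE [_%:M a b]mxE.
  by apply: cvgD; [exact: cvg_cst | apply: cvgMn; exact: coord_continuous].
move/cvgr_neq0; rewrite -unitfE -unitmxE addmx_scalar_unitmxE => /(_ (lj j)) detA.
near=> y; rewrite -addmx_scalar_unitmxE unitmxE unitfE.
by near: y.
Unshelve. all: by end_near. Qed.

End Invertibility.

Section DiagonalExponential.
Context {R : realType} {r : nat}.
Local Open Scope complex_scope.
Local Notation C := (Num.NumField.sort (R[i] : numFieldType)).
Implicit Types (t : C) (l v : 'rV[C]_r).

Definition expdiag t l : 'M[C]_r := diag_mx (\row_j cexp (t * l 0 j)).

Lemma expmx_scale_diag t l : expmx (t *: diag_mx l) = expdiag t l.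
Proof. by rewrite scale_diag_mx expmx_diag_mx. Qed.
Lemma is_derive_cexp_entry t l v j :
  is_derive l v (fun y : 'rV[C]_r => cexp (t * y 0 j)) (t * v 0 j * cexp (t * l 0 j)).
Proof.
apply: (is_derive_comp_affine (g := fun y : 'rV[C]_r => t * y 0 j)).
  by move=> h; rewrite !mxE mulrDr mulrCA.
exact: is_derive_cexp.
Qed.

Lemma derivable_expdiag t l v : derivable (expdiag t) l v.
Proof.
apply/derivable_diag_mx/derivable_row => j.
by have [] := is_derive_cexp_entry t l v j.
Qed.

Lemma derive_expdiag t l v : 'D_v (expdiag t) l = t *: (diag_mx v *m expdiag t l).
Proof.
have dF j : derivable (fun y : 'rV[C]_r => cexp (t * y 0 j)) l v.
  by have [] := is_derive_cexp_entry t l v j.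
rewrite /expdiag derive_diag_mx ?derive_row //; last exact: derivable_row.
rewrite mulmx_diag scale_diag_mx.
congr diag_mx; apply/rowP => j; rewrite !mxE.
by have [_ ->] := is_derive_cexp_entry t l v j; rewrite mulrA.
Qed.
Lemma derivable_expdiag_sandwich t (S : 'M[C]_r) l v :
  derivable (fun y => expdiag t y *m S *m expdiag t y) l v.
Proof.
by apply: derivable_mulmx; [apply: derivable_mulmx | ];
  [exact: derivable_expdiag | exact: derivable_cst | exact: derivable_expdiag].
Qed.

Lemma derive_expdiag_sandwich t (S : 'M[C]_r) l v :
  'D_v (fun y => expdiag t y *m S *m expdiag t y) l
  = t *: (diag_mx v *m expdiag t l *m S *m expdiag t l
          + expdiag t l *m S *m expdiag t l *m diag_mx v).
Proof.
have dE := @derivable_expdiag t l v.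
have dS := derivable_cst S l v.
have dES : derivable (fun y => expdiag t y *m S) l v := derivable_mulmx dE dS.
rewrite (derive_mulmx dES dE) (derive_mulmx dE dS) derive_cst mulmx0 addr0 derive_expdiag.
rewrite -!scalemxAl -scalemxAr scalerDr; congr (_ + _).
by rewrite /expdiag [diag_mx v *m _]diag_mxC !mulmxA.
Qed.
Lemma derive_mul_expdiag p (Q : 'M[C]_(p, r)) t l v :
  'D_v (fun y => Q *m expdiag t y) l = t *: (Q *m expdiag t l *m diag_mx v).
Proof.
rewrite derive_mulmxl; last exact: derivable_expdiag.
by rewrite derive_expdiag -scalemxAr /expdiag diag_mxC mulmxA.
Qed.

End DiagonalExponential.

Local Open Scope complex_scope.

Theorem lemma3p1 (R : realType) (n m r : nat)
  (A : 'M[R]_n) (B : 'M[R]_(n, m)) (T : R) (Bt : 'M[R[i]]_(r, m))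
  (P : 'rV[R[i]]_r -> 'M[R[i]]_(r, r))
  (P2 : 'rV[R[i]]_r -> 'M[R[i]]_(n, r)) :
  0 < T ->
  let adm := fun lam : 'rV[R[i]]_r =>
    (forall k l : 'I_r, lam 0 k + lam 0 l != 0) /\
    (forall k : 'I_r, ~~ eigenvalue (- cmx A) (lam 0 k)) in
  let EDT := fun lam : 'rV[R[i]]_r => expmx (T%:C *: diag_mx lam) in
  let EAT := expmx (T%:C *: cmx A) in
  (forall lam, adm lam ->
     diag_mx lam *m P lam + P lam *m diag_mx lam
     = - (Bt *m Bt^T) + EDT lam *m Bt *m Bt^T *m EDT lam) ->
  (forall lam, adm lam ->
     cmx A *m P2 lam + P2 lam *m diag_mx lam
     = - (cmx B *m Bt^T) + EAT *m cmx B *m Bt^T *m EDT lam) ->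
  forall lam : 'rV[R[i]]_r, adm lam ->
  forall k : 'I_r,
    let ek : 'rV[R[i]]_r := 'e_k in
    let Ek := ek^T *m ek in
    let X := 'D_ek P lam in
    let X2 := 'D_ek P2 lam in
    derivable P lam ek /\ derivable P2 lam ek /\
    diag_mx lam *m X + X *m diag_mx lam
      = - (Ek *m P lam) - P lam *m Ek
        + T%:C *: (Ek *m EDT lam *m Bt *m Bt^T *m EDT lam)
        + T%:C *: (EDT lam *m Bt *m Bt^T *m EDT lam *m Ek) /\
    cmx A *m X2 + X2 *m diag_mx lam
      = - (P2 lam *m Ek) + T%:C *: (EAT *m cmx B *m Bt^T *m EDT lam *m Ek).
Proof.
move=> T0 adm EDT EAT HP HP2 lam lam_adm k ek Ek X X2.
have EDTE l : EDT l = expdiag T%:C l by exact: expmx_scale_diag.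
have EkE : Ek = diag_mx ek by exact: tr_delta_row_mul.
have near_adm : \forall l \near (lam : 'rV[(R[i] : numFieldType)]_r), adm l.
  case: lam_adm => lsum leig.
  by apply: filterS2 (near_sum_neq0 lsum) (near_not_eigenvalue leig) => l ? ?; split.
set S := Bt *m Bt^T.
set W := EAT *m cmx B *m Bt^T.
pose G l := - S + expdiag T%:C l *m S *m expdiag T%:C l.
pose G2 l := - (cmx B *m Bt^T) + W *m expdiag T%:C l.
have sylP : nbhs (lam : 'rV[(R[i] : numFieldType)]_r) (fun l : 'rV[R[i]]_r =>
    (forall j, diag_mx l + (l 0 j)%:M \in unitmx) /\
    diag_mx l *m P l + P l *m diag_mx l = G l).
  apply: filterS near_adm => l la; split.
    by move=> j; apply: diag_add_scalar_unitmx; case: la.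
  by rewrite (HP l la) EDTE /G -!mulmxA.
have sylP2 : nbhs (lam : 'rV[(R[i] : numFieldType)]_r) (fun l : 'rV[R[i]]_r =>
    (forall j, cmx A + (l 0 j)%:M \in unitmx) /\
    cmx A *m P2 l + P2 l *m diag_mx l = G2 l).
  apply: filterS near_adm => l la; split.
    by move=> j; rewrite addmx_scalar_unitmxE; case: la.
  by rewrite (HP2 l la) EDTE /G2.
have did : derivable (@id 'rV[R[i]]_r) lam ek by exact: derivable_id.
have dD : derivable (fun l : 'rV[R[i]]_r => diag_mx l) lam ek := derivable_diag_mx did.
have dA : derivable (fun=> cmx A) lam ek := derivable_cst _ _ _.
have dGs := @derivable_expdiag_sandwich R r T%:C S lam ek.
have dG : derivable G lam ek := derivableD (derivable_cst _ _ _) dGs.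
have dWE : derivable (fun l => W *m expdiag T%:C l) lam ek :=
  derivable_mulmx (derivable_cst W _ _) (@derivable_expdiag R r T%:C lam ek).
have dG2 : derivable G2 lam ek := derivableD (derivable_cst _ _ _) dWE.
have DX : diag_mx lam *m X + X *m diag_mx lam
    = 'D_ek G lam - ('D_ek (fun l : 'rV[R[i]]_r => diag_mx l) lam *m P lam
                     + P lam *m diag_mx ('D_ek id lam)) := derive_sylvester sylP dD did dG.
have DX2 : cmx A *m X2 + X2 *m diag_mx lam
    = 'D_ek G2 lam - ('D_ek (fun=> cmx A) lam *m P2 lam
                      + P2 lam *m diag_mx ('D_ek id lam)) := derive_sylvester sylP2 dA did dG2.
have DD : 'D_ek (fun l : 'rV[R[i]]_r => diag_mx l) lam = Ek.
  by rewrite derive_diag_mx // derive_id EkE.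
have DDid : diag_mx ('D_ek id lam) = Ek by rewrite derive_id EkE.
have DG : 'D_ek G lam = T%:C *: (Ek *m EDT lam *m Bt *m Bt^T *m EDT lam
                                 + EDT lam *m Bt *m Bt^T *m EDT lam *m Ek).
  rewrite (etrans (derive_cstD (- S) dGs) (derive_expdiag_sandwich T%:C S lam ek)).
  by rewrite EkE !EDTE /S -!mulmxA.
have DG2 : 'D_ek G2 lam = T%:C *: (W *m EDT lam *m Ek).
  rewrite (etrans (derive_cstD (- (cmx B *m Bt^T)) dWE) (derive_mul_expdiag W T%:C lam ek)).
  by rewrite EkE EDTE.
split; first exact: derivable_sylvester sylP dD did dG.
split; first exact: derivable_sylvester sylP2 dA did dG2.
split.
  by rewrite DX DG DD DDid scalerDr opprD addrC addrA.
by rewrite DX2 DG2 derive_cst mul0mx add0r DDid addrC.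
Qed.
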